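(* Let $P$ be a naf-monotone basic program. A set of atoms $M$ is a weakly well-supported model of $P$ if and only if it is a strongly well-supported model of $P$.
   Context: Fix a countable set $\mathcal{A}$ of atoms. A c-atom is $A=(A_d,A_c)$, $A_d\subseteq\mathcal{A}$, $A_c\subseteq 2^{A_d}$; monotone if $X\subseteq Y\subseteq A_d$, $X\in A_c$ imply $Y\in A_c$; $(\{p\},\{\{p\}\})$ is elementary; $\bot=(\mathcal{A},\emptyset)$; complement $\bar A=(A_d,2^{A_d}\setminus A_c)$. Rule: $A\leftarrow A_1,\dots,A_k,\mathit{not}\,A_{k+1},\dots,\mathit{not}\,A_n$, $head(r)=A$, $pos(r)=\{A_1,..,A_k\}$, $neg(r)=\{A_{k+1},..,A_n\}$. Program = set of rules; basic if every head is elementary or $\bot$; naf-monotone if every c-atom in some $neg(r)$ is monotone. $S\models A$ iff $S\cap A_d\in A_c$; $S\models\mathit{not}\,A$ iff $S\cap A_d\notin A_c$; $S\models body(r)$ if all body literals hold; model = satisfies every rule (head holds or body fails). Conditional satisfaction: $S\models_M A$ iff $S\models A$ and every $I$ with $S\cap A_d\subseteq I\subseteq M\cap A_d$ lies in $A_c$. For $\ell:M\to\{1,2,\dots\}$: $H(X)=\max\{\ell(a)\mid a\in X\}$ ($\max\emptyset=0$), $L(A,M)=\min\{H(X)\mid X\in A_c,\ X\subseteq M,\ X\models_M A\}$, undefined if empty. A model $M$ of $P$ is weakly well-supported iff some $\ell$ satisfies: for each $b\in M$ there is $r\in P$ with $head(r)=(\{b\},\{\{b\}\})$, $M\models body(r)$,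 and $L(A,M)$ defined with $\ell(b)>L(A,M)$ for all $A\in pos(r)$. It is strongly well-supported iff some $\ell$ satisfies the same with the additional requirement that $L(\bar A,M)$ is defined and $\ell(b)>L(\bar A,M)$ for all $A\in neg(r)$. *)

From Stdlib Require Import List.
From mathcomp Require Import all_boot.
Set Implicit Arguments.
Unset Strict Implicit.
Unset Printing Implicit Defensive.

Section CAtoms.
Variable Atom : countType.

Definition aset := Atom -> Prop.
Definition subset (X Y : aset) : Prop := forall a, X a -> Y a.

(* c-atom A = (A_d, A_c) with A_c a family of subsets of A_d *)
Record catom := CAtom {
  cdom : aset;
  cset : aset -> Prop;
  cset_sub : forall X, cset X -> subset X cdom }.

Definition monotone (A : catom) : Prop :=
  forall X Y, subset X Y -> subset Y (cdom A) -> cset A X -> cset A Y.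

Definition is_elementary (A : catom) (p : Atom) : Prop :=
  (forall a, cdom A a <-> a = p) /\
  (forall X, cset A X <-> (forall a, X a <-> a = p)).

Definition is_bot (A : catom) : Prop :=
  (forall a, cdom A a) /\ (forall X, ~ cset A X).

Definition compl (A : catom) : catom.
Proof.
  refine (@CAtom (cdom A) (fun X => subset X (cdom A) /\ ~ cset A X) _).
  by move=> X [].
Defined.

Record rule := Rule { head : catom; pos : list catom; neg : list catom }.
Definition program := rule -> Prop.

Definition basic (P : program) : Prop :=
  forall r, P r -> (exists p, is_elementary (head r) p) \/ is_bot (head r).

Definition naf_monotone (P : program) : Prop :=
  forall r, P r -> forall A, List.In A (neg r) -> monotone A.

Definition inter (S : aset) (A : catom) : aset := fun a => S a /\ cdom A a.

Definition sat (S : aset) (A : catom) : Prop := cset A (inter S A).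
Definition sat_not (S : aset) (A : catom) : Prop := ~ cset A (inter S A).

Definition sat_body (S : aset) (r : rule) : Prop :=
  (forall A, List.In A (pos r) -> sat S A) /\
  (forall A, List.In A (neg r) -> sat_not S A).

Definition is_model (P : program) (M : aset) : Prop :=
  forall r, P r -> sat_body M r -> sat M (head r).

Definition csat (M S : aset) (A : catom) : Prop :=
  sat S A /\
  forall I, subset (inter S A) I -> subset I (inter M A) -> cset A I.

(* H(X) = n : n = max {l a | a in X}, with max of the empty set = 0
   (relational; undefined when the maximum does not exist) *)
Definition Hval (l : Atom -> nat) (X : aset) (n : nat) : Prop :=
  ((forall a, ~ X a) /\ n = 0) \/
  ((exists a, X a /\ l a = n) /\ (forall a, X a -> l a <= n)).

Definition Lcand (M : aset) (A : catom) (X : aset) : Prop :=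
  cset A X /\ subset X M /\ csat M X A.

Definition Lval (l : Atom -> nat) (A : catom) (M : aset) (n : nat) : Prop :=
  (exists X, Lcand M A X /\ Hval l X n) /\
  (forall X m, Lcand M A X -> Hval l X m -> n <= m).

Definition level_mapping (M : aset) (l : Atom -> nat) : Prop :=
  forall a, M a -> 1 <= l a.

Definition weakly_well_supported (P : program) (M : aset) : Prop :=
  is_model P M /\
  exists l, level_mapping M l /\
    forall b, M b -> exists r, P r /\ is_elementary (head r) b /\
      sat_body M r /\
      (forall A, List.In A (pos r) -> exists n, Lval l A M n /\ n < l b).

Definition strongly_well_supported (P : program) (M : aset) : Prop :=
  is_model P M /\
  exists l, level_mapping M l /\
    forall b, M b -> exists r, P r /\ is_elementary (head r) b /\
      sat_body M r /\
      (forall A, List.In A (pos r) -> exists n, Lval l A M n /\ n < l b) /\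
      (forall A, List.In A (neg r) -> exists n, Lval l (compl A) M n /\ n < l b).

End CAtoms.

From Pilot Require Import Defs.
From mathcomp Require Import all_boot.

(* Weak and strong well-support differ only in the extra requirement
   l(b) > L(compl A, M) for the negative body literals "not A" of the
   supporting rule.  The strong notion trivially implies the weak one.
   Conversely, let "not A" be a negative literal of a rule whose body M
   satisfies, with A monotone.  Since M does not satisfy A and A is monotone,
   no subset of M ∩ A_d belongs to A_c, so every such subset belongs to the
   complement.  Hence the empty set is a candidate for L(compl A, M): it is
   in the complement, lies in M, and is conditionally satisfied w.r.t. M.
   Its H-value is 0, so L(compl A, M) = 0 < 1 <= l(b) for every level
   mapping l.  Thus the level mapping witnessing weak well-support also
   witnesses strong well-support for naf-monotone programs. *)

Section ComplementLevel.
Variables (Atom : countType) (M : aset Atom) (A : catom Atom).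

Definition empty_set : aset Atom := fun _ => False.

(* For monotone A not satisfied by M, every subset of M ∩ A_d lies in the
   complement of A: otherwise monotonicity would force M ∩ A_d into A_c. *)
Lemma compl_contains_subsets :
  monotone A -> sat_not M A ->
  forall I, Defs.subset I (inter M A) -> cset (compl A) I.
Proof.
move=> monA notMA I sub_I; split; first by move=> a /sub_I [].
move=> cI; apply: notMA; apply: (monA I) => //.
by move=> a [].
Qed.

Lemma Hval_empty (l : Atom -> nat) : Hval l empty_set 0.
Proof. by left; split=> [a []|]. Qed.

Lemma Lval_compl_zero (l : Atom -> nat) :
  monotone A -> sat_not M A -> Lval l (compl A) M 0.
Proof.
move=> monA notMA; have in_compl := compl_contains_subsets monA notMA.
split; last by move=> X m.
exists empty_set; split; last exact: Hval_empty.
split; first by apply: in_compl => a [].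
split; first by [].
split; first by apply: in_compl => a [[]].
by move=> I _ sub_I; apply: in_compl => a /sub_I [].
Qed.

End ComplementLevel.

Lemma strongly_weakly (Atom : countType) (P : program Atom) (M : aset Atom) :
  strongly_well_supported P M -> weakly_well_supported P M.
Proof.
move=> [modM [l [lvl supp]]]; split=> //; exists l; split=> //.
move=> b Mb; have [r [Pr [elem [body [posL _]]]]] := supp b Mb.
by exists r.
Qed.

Lemma weakly_strongly (Atom : countType) (P : program Atom) (M : aset Atom) :
  naf_monotone P -> weakly_well_supported P M -> strongly_well_supported P M.
Proof.
move=> nafP [modM [l [lvl supp]]]; split=> //; exists l; split=> //.
move=> b Mb; have [r [Pr [elem [body posL]]]] := supp b Mb.
exists r; do 4 (split=> //).
move=> A inA; exists 0; split; last exact: lvl.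
apply: Lval_compl_zero; first exact: (nafP r Pr A inA).
exact: body.2 A inA.
Qed.

Theorem corollary4 (Atom : countType) (P : program Atom) (M : aset Atom) :
  basic P -> naf_monotone P ->
  (weakly_well_supported P M <-> strongly_well_supported P M).
Proof.
move=> _ nafP; split; first exact: weakly_strongly.
exact: strongly_weakly.
Qed.
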